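(* Let $n$ be a positive odd integer and let $x\in\mathbb{Z}$ with $\gcd(x(1-x),n)=1$. Then $$(-1)^{|\{1\le k<n/2:\ \{kx\}_n>k\}|}=\left(\frac{2x(1-x)}{n}\right),$$ $$(-1)^{|\{1\le k<n/2:\ \{kx\}_n>n/2\ \&\ \{k(1-x)\}_n>n/2\}|}=\left(\frac{2}{n}\right),$$ $$(-1)^{|\{1\le k<n/2:\ \{kx\}_n<n/2\ \&\ \{k(1-x)\}_n<n/2\}|}=\left(\frac{2x(x-1)}{n}\right),$$ and $$(-1)^{|\{1\le k<n/2:\ \{kx\}_n>n/2>\{k(1-x)\}_n\}|}=\left(\frac{2x}{n}\right).$$
   Context: For a positive integer $n$ and an integer $y$, $\{y\}_n$ denotes the unique integer $r\in\{0,1,\dots,n-1\}$ with $r\equiv y\pmod n$. $\left(\frac{\cdot}{n}\right)$ denotes the Jacobi symbol. *)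

From HB Require Import structures.
From mathcomp Require Import all_boot all_order all_algebra.
Set Implicit Arguments. Unset Strict Implicit. Unset Printing Implicit Defensive.
Import Order.TTheory GRing.Theory Num.Theory.
Local Open Scope ring_scope.

Definition lres (y : int) (n : nat) : int := (y %% n%:Z)%Z.

Definition legendre (a : int) (p : nat) : int :=
  if (p%:Z %| a)%Z then 0
  else if [exists y : 'I_p, (p%:Z %| (y%:Z ^+ 2 - a))%Z] then 1 else -1.

Definition jacobi (a : int) (n : nat) : int :=
  \prod_(p <- primes n) legendre a p ^+ logn p n.

Definition cnt (n : nat) (P : nat -> bool) : nat :=
  count (fun k => (2 * k < n)%N && P k) (iota 1 n.-1).

(* For odd n and a coprime to n, let G(n, a) be the number of 1 <= k < n/2 with
   {ka}_n > n/2.  Gauss's lemma extends to Jacobi symbols: (a/n) = (-1)^G(n, a).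
   For a prime this is Gauss's product argument together with Euler's criterion;
   the parity of G is multiplicative in a because the absolute least residues of
   the ka permute 1 .. (n-1)/2, and multiplicative in n by Eisenstein's
   lattice-point proof of reciprocity for G.
   Now {kx}_n + {k(1-x)}_n is k or k + n according as {kx}_n > k, i.e. as one of
   the two residues exceeds n/2.  Summing over k, since sum_k {ka}_n has the parity
   of sum_k k + G(n, a), the first count has the parity of
   G(n, 2) + G(n, x) + G(n, 1 - x); the other three counts follow by
   inclusion-exclusion from G(n, 2), G(n, -1) = (n-1)/2 and G(n, x). *)

From HB Require Import structures.
From mathcomp Require Import all_boot all_order all_algebra finfield.
From mathcomp Require Import zify ring.
Import Order.TTheory GRing.Theory Num.Theory.
Local Open Scope ring_scope.
Set Implicit Arguments. Unset Strict Implicit.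

Lemma jacobiE a n N : (0 < n)%N -> (n < N)%N ->
  jacobi a n = \prod_(q <- index_iota 0 N | prime q) legendre a q ^+ logn q n.
Proof.
move=> n0 nN; rewrite /jacobi -(filter_pi_of nN) big_filter.
rewrite big_mkcond [RHS]big_mkcond; apply: eq_bigr => q _ /=.
rewrite /pi_of /= mem_primes n0 /=.
case: (boolP (prime q)) => //= pq; case: (boolP (q %| n)%N) => // qn.
have -> : logn q n = 0%N by apply/eqP; rewrite -leqn0 leqNgt logn_gt0 mem_primes pq n0.
by rewrite expr0.
Qed.

Lemma jacobiM a m n : (0 < m)%N -> (0 < n)%N ->
  jacobi a (m * n) = jacobi a m * jacobi a n.
Proof.
move=> m0 n0; have mn0 : (0 < m * n)%N by rewrite muln_gt0 m0.
rewrite !(@jacobiE a _ (m * n).+1) ?ltnS ?leq_pmulr ?leq_pmull // -big_split /=.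
by apply: eq_bigr => q pq; rewrite lognM // exprD.
Qed.

Lemma oddn_neq_double (n : nat) (z : int) : odd n -> n%:Z != 2 * z.
Proof.
move=> on; apply/eqP => E; have z0 : 0 <= z by lia.
have /eqP := E; rewrite -(gez0_abs z0) -PoszM eqz_nat => /eqP En.
by move: on; rewrite En oddM.
Qed.

Lemma odd_natz_half (n : nat) : odd n -> n%:Z = 2 * (n./2)%:Z + 1.
Proof. by move=> on; have := odd_double_half n; rewrite on -muln2; lia. Qed.

Lemma coprimez2n (n : nat) : coprimez 2 n = odd n.
Proof. by rewrite coprimezE coprime2n. Qed.

Lemma count_sum (I : Type) (s : seq I) (p : pred I) : count p s = (\sum_(i <- s) p i)%N.
Proof. by elim: s => [|x s IH]; rewrite ?big_nil ?big_cons //= IH. Qed.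

Lemma odd_count_addb (T : Type) (p q : pred T) s :
  odd (count (fun x => p x (+) q x) s) = odd (count p s) (+) odd (count q s).
Proof.
elim: s => //= x s IH; rewrite !oddD IH.
by case: (p x); case: (q x); case: (odd (count p s)); case: (odd (count q s)).
Qed.

Lemma count_predDI (T : Type) (a b : pred T) s :
  (count (predD a b) s + count (predI a b) s = count a s)%N.
Proof. by elim: s => //= y s <-; case: (a y); case: (b y) => /=; lia. Qed.

Lemma count_iota_leq (H q : nat) : (q <= H)%N -> count (fun j => (j <= q)%N) (iota 1 H) = q.
Proof.
move=> qH; rewrite -(subnKC qH) iotaD count_cat.
rewrite (@eq_in_count _ _ predT) => [|j]; last by rewrite mem_iota /=; lia.
rewrite (@eq_in_count _ _ pred0 (iota (1 + q) _)) => [|j]; last by rewrite mem_iota /=; lia.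
by rewrite count_predT count_pred0 size_iota addn0.
Qed.

Lemma divn_count (m c H : nat) : (0 < m)%N -> (c %/ m <= H)%N ->
  (c %/ m = count (fun j => j * m <= c) (iota 1 H))%N.
Proof.
by move=> m0 cH; rewrite -{1}(count_iota_leq cH); apply: eq_count => j; rewrite leq_divRL.
Qed.

Lemma prodr_sign_count (R : pzRingType) (I : Type) (s : seq I) (P : pred I) :
  \prod_(i <- s) ((-1) ^+ P i : R) = (-1) ^+ count P s.
Proof. by elim: s => [|x s IH]; rewrite ?big_nil ?big_cons //= IH exprD. Qed.

Lemma even_natz_double (N : nat) (W : int) : N%:Z = 2 * W -> ~~ odd N.
Proof. by move=> E; apply/negP => oN; have := oddn_neq_double W oN; rewrite E eqxx. Qed.

Lemma odd_half_mul m n : odd m -> odd n -> odd (m * n)./2 = odd m./2 (+) odd n./2.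
Proof.
move=> om on; have hm := odd_natz_half om; have hn := odd_natz_half on.
have hmn : (m * n)%:Z = 2 * ((m * n)./2)%:Z + 1 by rewrite odd_natz_half // oddM om on.
have -> : ((m * n)./2 = (m./2 * n./2).*2 + (m./2 + n./2))%N.
  apply/eqP; rewrite -eqz_nat; apply/eqP; rewrite PoszD -muln2 !PoszM.
  by rewrite PoszM hm hn in hmn; lia.
by rewrite oddD odd_double oddD.
Qed.

Lemma mem_iota_half n k : odd n -> (k \in iota 1 n./2) = (0 < k)%N && (2 * k < n)%N.
Proof. by move=> /odd_natz_half nh; rewrite mem_iota; apply/idP/idP; lia. Qed.

Lemma dvdz_small (n : nat) (z : int) : (n%:Z %| z)%Z -> - n%:Z < z < n%:Z -> z = 0.
Proof.
move=> /dvdzP [q ->] /andP [h1 h2].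
by have [q0|q0|->] := ltrgtP q 0; [nia | nia | rewrite mul0r].
Qed.

Lemma lres_bounds (n : nat) (t : int) : (0 < n)%N -> 0 <= lres t n < n%:Z.
Proof. by move=> n0; rewrite /lres modz_ge0 ?ltz_pmod //; lia. Qed.

Lemma lres_mul_eq0 (n : nat) (a z : int) : coprimez a n ->
  (lres (z * a) n == 0) = (n%:Z %| z)%Z.
Proof.
move=> ca; have na : coprimez n a by rewrite coprimez_sym.
by rewrite -(Gauss_dvdzl z na) /lres; apply/eqP/dvdz_mod0P.
Qed.

Lemma lres_mul_neq0 (n : nat) (a z : int) : coprimez a n -> 0 < z < n%:Z ->
  lres (z * a) n != 0.
Proof. by move=> ca z0n; rewrite lres_mul_eq0 //; apply/negP => /dvdz_small; lia. Qed.

Definition upper (n : nat) (t : int) : bool := n%:Z < 2 * lres t n.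

Lemma upper_lres n t s : lres t n = lres s n -> upper n t = upper n s.
Proof. by rewrite /upper => ->. Qed.

Lemma upperN n t : odd n -> lres t n != 0 -> upper n (- t) = ~~ upper n t.
Proof.
move=> on r0; have [rl rh] := andP (lres_bounds t (odd_gt0 on)).
rewrite /upper; have -> : lres (- t) n = n%:Z - lres t n.
  rewrite /lres -modzNm -(modzDl _ n%:Z) modz_small //; move: r0; rewrite /lres; lia.
by have := oddn_neq_double (lres t n) on; lia.
Qed.

Definition absres (n : nat) (t : int) : int :=
  if upper n t then n%:Z - lres t n else lres t n.

Lemma absres_bounds n t : odd n -> lres t n != 0 ->
  0 < absres n t /\ 2 * absres n t < n%:Z.
Proof.
move=> on r0; have [rl rh] := andP (lres_bounds t (odd_gt0 on)).
have := oddn_neq_double (lres t n) on.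
by rewrite /absres /upper; case: ifP; lia.
Qed.

Lemma lres_absres n t : lres t n = lres ((-1) ^+ upper n t * absres n t) n.
Proof.
rewrite /absres /lres; case: ifP => _; last by rewrite mul1r modz_mod.
rewrite mulN1r opprB (_ : _ - n%:Z = (-1) * n%:Z + (t %% n%:Z)%Z); last by ring.
by rewrite modzMDl modz_mod.
Qed.

Lemma absres_inj n a k j : odd n -> coprimez a n ->
  (0 < k)%N -> (2 * k < n)%N -> (0 < j)%N -> (2 * j < n)%N ->
  absres n (k%:Z * a) = absres n (j%:Z * a) -> k = j.
Proof.
move=> on ca k0 kn j0 jn; have na : coprimez n a by rewrite coprimez_sym.
have small (z : int) : (n%:Z %| z * a)%Z -> - n%:Z < z < n%:Z -> z = 0.
  by rewrite Gauss_dvdzl //; apply: dvdz_small.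
have same : lres (k%:Z * a) n = lres (j%:Z * a) n -> k = j.
  move=> /eqP; rewrite /lres eqz_mod_dvd -mulrBl => /small; lia.
have opp : lres (k%:Z * a) n + lres (j%:Z * a) n = n%:Z -> k = j.
  move=> E; have : (n%:Z %| (k%:Z + j%:Z) * a)%Z.
    by apply/dvdz_mod0P; rewrite mulrDl -modzDm E modzz.
  move=> /small; lia.
by rewrite /absres; case: ifP => _; case: ifP => _ E;
  [apply: same | apply: opp | apply: opp | apply: same]; lia.
Qed.

Lemma perm_absres n a : odd n -> coprimez a n ->
  perm_eq [seq absres n (k%:Z * a) | k <- iota 1 n./2] [seq k%:Z | k <- iota 1 n./2].
Proof.
move=> on ca; have nh := odd_natz_half on.
have uniq_abs : uniq [seq absres n (k%:Z * a) | k <- iota 1 n./2].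
  rewrite map_inj_in_uniq ?iota_uniq // => k j.
  by rewrite !mem_iota_half // => /andP [? ?] /andP [? ?]; apply: absres_inj.
have sub_abs : {subset [seq absres n (k%:Z * a) | k <- iota 1 n./2]
                  <= [seq k%:Z | k <- iota 1 n./2]}.
  move=> z /mapP [k]; rewrite mem_iota_half // => /andP [k0 kn] ->.
  have [] := absres_bounds on (lres_mul_neq0 ca (_ : 0 < k%:Z < n%:Z)); first lia.
  move=> r0 rn; apply/mapP; exists `|absres n (k%:Z * a)|%N; last by rewrite gez0_abs //; lia.
  by rewrite mem_iota; lia.
have size_abs : (size [seq k%:Z | k <- iota 1 n./2]
                  <= size [seq absres n (k%:Z * a) | k <- iota 1 n./2])%N.
  by rewrite !size_map.
have [_ eq_abs] := uniq_min_size uniq_abs sub_abs size_abs.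
by apply: uniq_perm; rewrite // map_inj_uniq ?iota_uniq // => ? ? [].
Qed.

Definition gauss_count (n : nat) (a : int) : nat :=
  count (fun k : nat => upper n (k%:Z * a)) (iota 1 n./2).

Lemma upper_mul_absres n t b : odd n -> lres t n != 0 -> coprimez b n ->
  upper n (t * b) = upper n t (+) upper n (absres n t * b).
Proof.
move=> on t0 cb; have [r0 rn] := absres_bounds on t0.
rewrite (upper_lres (_ : lres (t * b) n = lres ((-1) ^+ upper n t * absres n t * b) n)).
  by case: (upper n t); rewrite ?mulN1r ?mul1r ?mulNr ?upperN ?lres_mul_neq0 //; lia.
by rewrite /lres -modzMml -/(lres t n) lres_absres /lres modzMml.
Qed.

Lemma odd_gauss_countM n a b : odd n -> coprimez a n -> coprimez b n ->
  odd (gauss_count n (a * b)) = odd (gauss_count n a) (+) odd (gauss_count n b).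
Proof.
move=> on ca cb; rewrite /gauss_count.
rewrite (@eq_in_count _ _
  (fun k : nat => upper n (k%:Z * a) (+) upper n (absres n (k%:Z * a) * b))); last first.
  move=> k; rewrite mem_iota_half // => /andP [k0 kn].
  by rewrite mulrA upper_mul_absres // lres_mul_neq0 //; lia.
rewrite odd_count_addb -(count_map _ (fun z => upper n (z * b))).
by rewrite (permP (perm_absres on ca)) count_map.
Qed.

Lemma sum_lres_gauss_count n a : odd n -> coprimez a n -> exists W : int,
  \sum_(k <- iota 1 n./2) lres (k%:Z * a) n + (gauss_count n a)%:Z
    = (\sum_(k <- iota 1 n./2) k)%N%:Z + 2 * W.
Proof.
move=> on ca; have nh := odd_natz_half on.
pose w k : int := if upper n (k%:Z * a) then (n./2)%:Z + 1 - absres n (k%:Z * a) else 0.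
exists (\sum_(k <- iota 1 n./2) w k).
rewrite /gauss_count -sum1_count rmorph_sum /= (big_mkcond (fun k : nat => upper n (k%:Z * a))).
rewrite -big_split /=.
rewrite (eq_big_seq (fun k => absres n (k%:Z * a) + 2 * w k)) => [|k _]; last first.
  by rewrite /w /absres; case: (upper n (k%:Z * a)) => /=; lia.
rewrite big_split /= -mulr_sumr rmorph_sum /=; congr (_ + _).
rewrite -(big_map (fun k => absres n (k%:Z * a)) xpredT id).
by rewrite (perm_big _ (perm_absres on ca)) big_map.
Qed.

Lemma odd_gauss_count_floor n a : odd n -> odd a -> coprime a n ->
  odd (gauss_count n a%:Z) = odd (\sum_(k <- iota 1 n./2) (k * a %/ n))%N.
Proof.
move=> on oa ca; have n0 := odd_gt0 on.
have caz : coprimez a%:Z n by rewrite coprimezE.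
have [W EW] := sum_lres_gauss_count on caz.
set T := (\sum_(k <- iota 1 n./2) k)%N in EW.
set Q := (\sum_(k <- iota 1 n./2) (k * a %/ n))%N.
set R := (\sum_(k <- iota 1 n./2) (k * a %% n))%N.
have ET : (a * T = Q * n + R)%N.
  rewrite /T big_distrr /= /Q /R big_distrl /= -big_split /=.
  by apply: eq_bigr => k _; rewrite -divn_eq mulnC.
have ER : \sum_(k <- iota 1 n./2) lres (k%:Z * a%:Z) n = R%:Z.
  by rewrite /R rmorph_sum; apply: eq_bigr => k _; rewrite /lres -PoszM modz_nat.
rewrite ER in EW; have ha := odd_natz_half oa; have hn := odd_natz_half on.
have /even_natz_double : (Q + gauss_count n a)%N%:Z
    = 2 * ((a./2)%:Z * T%:Z - (n./2)%:Z * Q%:Z - W + (gauss_count n a)%:Z).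
  have ET' : a%:Z * T%:Z = Q%:Z * n%:Z + R%:Z by rewrite -!PoszM -PoszD ET.
  rewrite ha hn in ET'; rewrite PoszD; nia.
by rewrite oddD; case: (odd Q); case: (odd (gauss_count n a)).
Qed.

(* Eisenstein's lattice-point count: the diagonal of the rectangle
   (0, n/2) x (0, a/2) contains no lattice point since a and n are coprime. *)
Lemma sum_floor_lattice n a : odd n -> odd a -> coprime a n ->
  (\sum_(k <- iota 1 n./2) (k * a %/ n) + \sum_(j <- iota 1 a./2) (j * n %/ a)
    = n./2 * a./2)%N.
Proof.
move=> on oa ca; have n0 := odd_gt0 on; have a0 := odd_gt0 oa.
have hn := odd_natz_half on; have ha := odd_natz_half oa.
have -> : (\sum_(k <- iota 1 n./2) (k * a %/ n)
    = \sum_(k <- iota 1 n./2) \sum_(j <- iota 1 a./2) ((j * n <= k * a)%N : nat))%N.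
  apply: eq_big_seq => k; rewrite mem_iota_half // => /andP [k0 kn].
  by rewrite -count_sum -divn_count // -ltnS ltn_divLR //; nia.
have -> : (\sum_(j <- iota 1 a./2) (j * n %/ a)
    = \sum_(j <- iota 1 a./2) \sum_(k <- iota 1 n./2) ((k * a <= j * n)%N : nat))%N.
  apply: eq_big_seq => j; rewrite mem_iota_half // => /andP [j0 ja].
  by rewrite -count_sum -divn_count // -ltnS ltn_divLR //; nia.
rewrite (exchange_big _ _ (iota 1 a./2)) -big_split /=.
rewrite -[a./2 in RHS](size_iota 1) -sum1_size big_distrr /=.
apply: eq_big_seq => j; rewrite mem_iota_half // => /andP [j0 ja].
rewrite muln1 -[n./2 in RHS](size_iota 1) -sum1_size -big_split /=.
apply: eq_big_seq => k; rewrite mem_iota_half // => /andP [k0 kn].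
have : (j * n != k * a)%N.
  apply/eqP => E; have : (n %| k * a)%N by rewrite -E dvdn_mull.
  by rewrite Gauss_dvdl 1?coprime_sym // => /dvdn_leq; lia.
by case: (leqP (j * n) (k * a)); case: (leqP (k * a) (j * n)) => //=; lia.
Qed.

Lemma odd_gauss_count_reciprocity n a : odd n -> odd a -> coprime a n ->
  odd (gauss_count n a%:Z) (+) odd (gauss_count a n%:Z) = odd (n./2 * a./2).
Proof.
move=> on oa ca; have cn : coprime n a by rewrite coprime_sym.
by rewrite !odd_gauss_count_floor // -oddD sum_floor_lattice.
Qed.

Lemma odd_gauss_count2 n : odd n ->
  odd (gauss_count n 2) = odd (\sum_(k <- iota 1 n./2) k)%N.
Proof.
move=> on; have c2 : coprimez 2 n by rewrite coprimez2n.
have [W EW] := sum_lres_gauss_count on c2; have hn := odd_natz_half on.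
set T := (\sum_(k <- iota 1 n./2) k)%N in EW *.
have ET : \sum_(k <- iota 1 n./2) lres (k%:Z * 2) n = 2 * T%:Z.
  rewrite /T rmorph_sum /= mulr_sumr; apply: eq_big_seq => k.
  by rewrite mem_iota_half // => /andP [k0 kn]; rewrite /lres modz_small; lia.
have /even_natz_double : (gauss_count n 2 + T)%N%:Z = 2 * W by rewrite PoszD; lia.
by rewrite oddD; case: (odd (gauss_count n 2)); case: (odd T).
Qed.

Lemma gauss_countN1 n : odd n -> gauss_count n (-1) = n./2.
Proof.
move=> on; have n0 := odd_gt0 on; have hn := odd_natz_half on.
rewrite /gauss_count -[RHS](size_iota 1) -count_predT.
apply: eq_in_count => k; rewrite mem_iota_half // => /andP [k0 kn] /=.
by rewrite mulrN1 upperN // /upper /lres ?modz_small; lia.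
Qed.

Lemma gauss_count_lres n a b : lres a n = lres b n -> gauss_count n a = gauss_count n b.
Proof.
move=> E; apply: eq_count => k /=; apply: upper_lres.
by rewrite /lres -modzMmr -/(lres a n) E /lres modzMmr.
Qed.

Lemma exists_odd_lres (N : nat) (a : int) : odd N ->
  exists2 b : nat, odd b & lres b%:Z N = lres a N.
Proof.
move=> oN; have [r0 rN] := andP (lres_bounds a (odd_gt0 oN)).
have er : `|lres a N|%N%:Z = lres a N by rewrite gez0_abs.
case or : (odd `|lres a N|%N).
  by exists `|lres a N|%N => //; rewrite er /lres modz_mod.
exists (`|lres a N| + N)%N; first by rewrite oddD or oN.
by rewrite PoszD /lres modzDr er modz_mod.
Qed.

(* Replace a by an odd b = a (mod mn): reciprocity for G then moves the modulus
   into the multiplier, where G is already known to be multiplicative. *)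
Lemma odd_gauss_count_modM m n a : odd m -> odd n -> coprimez a (m * n)%N ->
  odd (gauss_count (m * n) a) = odd (gauss_count m a) (+) odd (gauss_count n a).
Proof.
move=> om on ca; have omn : odd (m * n) by rewrite oddM om on.
have [b ob eb] := exists_odd_lres a omn.
have lres_b N : (N %| m * n)%N -> lres b N = lres a N.
  move=> dN; apply/eqP; rewrite /lres eqz_mod_dvd.
  by apply: (@dvdz_trans (m * n)%N%:Z) => //; rewrite -eqz_mod_dvd; apply/eqP.
have coprime_b N : (N %| m * n)%N -> coprime b N.
  move=> dN; suff : coprimez b N by rewrite coprimezE.
  rewrite /coprimez -gcdz_modl; have := lres_b N dN; rewrite /lres => ->.
  by rewrite gcdz_modl; apply: coprimez_dvdr ca.
have dm : (m %| m * n)%N by apply: dvdn_mulr.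
have dn : (n %| m * n)%N by apply: dvdn_mull.
rewrite -!(gauss_count_lres (lres_b _ _)) //.
have recip N : (N %| m * n)%N -> odd N ->
    odd (gauss_count N b%:Z) = odd (gauss_count b N%:Z) (+) odd (N./2 * b./2).
  move=> dN oN; rewrite -(odd_gauss_count_reciprocity oN ob (coprime_b _ dN)).
  by case: (odd (gauss_count N b%:Z)); case: (odd (gauss_count b N%:Z)).
have cbz N : (N %| m * n)%N -> coprimez N%:Z b.
  by move=> dN; rewrite coprimezE coprime_sym coprime_b.
rewrite !recip // PoszM odd_gauss_countM ?cbz // !oddM odd_half_mul //.
by case: (odd (gauss_count b m)); case: (odd (gauss_count b n));
  case: (odd m./2); case: (odd n./2); case: (odd b./2).
Qed.

Section GaussLemma.
Variable p : nat.
Hypotheses (pp : prime p) (op : odd p).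
Local Notation F := 'F_p.

Lemma Fp_intr_eq0 (t : int) : (t%:~R == 0 :> F) = (p%:Z %| t)%Z.
Proof. by rewrite (dvdz_pcharf (pchar_Fp pp)). Qed.

Lemma Fp_intr_lres (t : int) : ((lres t p)%:~R : F) = t%:~R.
Proof.
by apply/eqP; rewrite -subr_eq0 -rmorphB /= Fp_intr_eq0 -eqz_mod_dvd /lres modz_mod.
Qed.

Lemma Fp_intr_iota_half_neq0 (k : nat) : k \in iota 1 p./2 -> ((k%:Z)%:~R : F) != 0.
Proof.
by rewrite mem_iota_half // Fp_intr_eq0 => /andP [k0 kp]; apply/negP => /dvdz_small; lia.
Qed.

(* Multiply k a = (-1)^(upper p (k a)) |k a| over 1 <= k <= (p-1)/2: the |k a|
   permute these k. *)
Lemma Fp_gauss (a : int) : coprimez a p ->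
  (a%:~R : F) ^+ p./2 = (-1) ^+ gauss_count p a.
Proof.
move=> ca; set s := iota 1 p./2.
have fact_neq0 : \prod_(k <- s) ((k%:Z)%:~R : F) != 0.
  by rewrite prodf_seq_neq0; apply/allP => k /Fp_intr_iota_half_neq0.
have prod_const (c : F) : \prod_(k <- s) c = c ^+ p./2.
  by rewrite big_const_seq count_predT size_iota iter_mulr_1.
have : \prod_(k <- s) ((k%:Z * a)%:~R : F) =
       \prod_(k <- s) ((-1) ^+ upper p (k%:Z * a) * (absres p (k%:Z * a))%:~R).
  apply: eq_bigr => k _.
  by rewrite -Fp_intr_lres lres_absres Fp_intr_lres intrM rmorphXn rmorphN1.
rewrite big_split /= prodr_sign_count.
rewrite -(big_map (fun k : nat => absres p (k%:Z * a)) xpredT (fun z => (z%:~R : F))).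
rewrite (perm_big _ (perm_absres op ca)) big_map.
under eq_bigr do rewrite intrM.
by rewrite big_split /= prod_const mulrC => /mulIf; apply.
Qed.

Lemma Fp_expf_double_half (y : F) : y != 0 -> y ^+ (p./2).*2 = 1.
Proof.
move=> y0; apply: (mulIf y0); rewrite mul1r -exprSr.
have -> : (p./2).*2.+1 = #|F| by rewrite card_Fp //; move: (odd_double_half p); rewrite op.
exact: expf_card.
Qed.

Lemma Fp_N1_neq1 : (-1 : F) != 1.
Proof.
apply/eqP => N1; have : ((2%:Z)%:~R : F) == 0 by rewrite -pmulrn mulr2n -{1}N1 addNr.
rewrite Fp_intr_eq0 => /(dvdn_leq (isT : (0 < 2)%N)) p2.
by have := prime_gt1 pp; move: op; case: p p2 => [|[|[|]]].
Qed.

Lemma Fp_sqr_inj_iota_half :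
  {in iota 1 p./2 &, injective (fun k : nat => ((k%:Z)%:~R : F) ^+ 2)}.
Proof.
move=> k j; rewrite !mem_iota_half // => /andP [k0 kp] /andP [j0 jp] /eqP.
rewrite -subr_eq0 subr_sqr mulf_eq0 -!rmorphB -!rmorphD /= !Fp_intr_eq0.
by case/orP => /dvdz_small; lia.
Qed.

(* Euler's criterion, the direction needed: A and the (p-1)/2 nonzero squares
   would be too many roots of X^((p-1)/2) - 1. *)
Lemma Fp_nonsquare_expf_half (A : F) : (forall y : F, y ^+ 2 != A) -> A ^+ p./2 != 1.
Proof.
move=> nsqA; apply/eqP => A1.
pose q : {poly F} := 'X^(p./2) - 1%:P.
have q0 : q != 0 by rewrite -size_poly_eq0 size_XnsubC // half_gt0 prime_gt1.
pose rs := A :: [seq ((k%:Z)%:~R : F) ^+ 2 | k <- iota 1 p./2].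
have roots : all (root q) rs.
  apply/allP => z; rewrite inE => /orP [/eqP -> | /mapP [k /Fp_intr_iota_half_neq0 k0 ->]].
    by rewrite /root /q !hornerE A1 subrr.
  by rewrite /root /q !hornerE -exprM mul2n Fp_expf_double_half ?subrr.
have uniq_rs : uniq rs.
  rewrite /= map_inj_in_uniq ?iota_uniq ?andbT; last exact: Fp_sqr_inj_iota_half.
  by apply/mapP => -[k _ Ek]; move: (nsqA ((k%:Z)%:~R)); rewrite Ek eqxx.
have := max_poly_roots q0 roots uniq_rs.
by rewrite /= size_map size_iota size_XnsubC ?ltnn // half_gt0 prime_gt1.
Qed.

Lemma legendre_gauss (a : int) : coprimez a p -> legendre a p = (-1) ^+ gauss_count p a.
Proof.
move=> ca; have ndiv : ~~ (p%:Z %| a)%Z.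
  apply: contraL ca => pa; apply/eqP => g1.
  have : (p%:Z %| gcdz a p)%Z by rewrite dvdz_gcd pa dvdzz.
  by rewrite g1 dvdz1 /=; have := prime_gt1 pp; lia.
rewrite /legendre (negbTE ndiv) -signr_odd; have := Fp_gauss ca.
case: ifP => [/existsP [y py] | /negbT nsq].
- have Ey : (((y : nat)%:Z)%:~R : F) ^+ 2 = a%:~R.
    by apply/eqP; rewrite -subr_eq0 -rmorphXn -rmorphB /= Fp_intr_eq0.
  rewrite -Ey -exprM mul2n Fp_expf_double_half; last first.
    by apply: contra ndiv => /eqP y0; rewrite -Fp_intr_eq0 -Ey y0 expr0n.
  by rewrite -signr_odd; case: (odd _) => // /eqP; rewrite eq_sym (negbTE Fp_N1_neq1).
- have nsqA : forall y : F, y ^+ 2 != a%:~R.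
    move=> y; apply: contra nsq => /eqP Ey; apply/existsP.
    have yp : ((y : nat) < p)%N by rewrite -[p in (_ < p)%N](Fp_cast pp) ltn_ord.
    by exists (Ordinal yp); rewrite -Fp_intr_eq0 rmorphB rmorphXn /= -pmulrn natr_Zp Ey subrr.
  by move/eqP: (Fp_nonsquare_expf_half nsqA); rewrite -signr_odd; case: (odd _).
Qed.

End GaussLemma.

Lemma jacobi_gauss n a : odd n -> coprimez a n -> jacobi a n = (-1) ^+ gauss_count n a.
Proof.
elim/ltn_ind: n => n IH on ca.
have [n_le1 | n_gt1] := leqP n 1.
  have -> : n = 1%N by have := odd_gt0 on; lia.
  by rewrite /jacobi /gauss_count /= big_nil.
have pp := pdiv_prime n_gt1; have := pdiv_dvd n; set p := prime.pdiv n in pp * => pn.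
have [m Em] : exists m, n = (p * m)%N by exists (n %/ p)%N; rewrite mulnC divnK.
have /andP [op om] : odd p && odd m by rewrite -oddM -Em.
have mn : (m < n)%N by rewrite [in X in (_ < X)%N]Em ltn_Pmull ?prime_gt1 ?odd_gt0.
have cp : coprimez a p by apply: coprimez_dvdr ca.
have cm : coprimez a m by apply: coprimez_dvdr ca; rewrite [in X in (_ %| X)%N]Em dvdn_mull.
have jacobi_prime : jacobi a p = legendre a p.
  by rewrite /jacobi primes_prime // big_seq1 logn_prime // eqxx.
rewrite Em jacobiM ?odd_gt0 // (IH m) // jacobi_prime legendre_gauss //.
by rewrite -[RHS]signr_odd odd_gauss_count_modM -?Em // signr_addb !signr_odd.
Qed.

Lemma cnt_iota n P : odd n -> cnt n P = count P (iota 1 n./2).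
Proof.
move=> on; rewrite /cnt (_ : n.-1 = n./2 + n./2)%N; last first.
  by move: (odd_double_half n); rewrite on -addnn; lia.
rewrite iotaD count_cat.
rewrite (@eq_in_count _ _ P) => [|k]; last by rewrite mem_iota_half // => /andP [_ ->].
rewrite (@eq_in_count _ _ pred0 (iota (1 + n./2) _)) ?count_pred0 ?addn0 // => k.
by rewrite mem_iota /=; have := odd_natz_half on; lia.
Qed.

Lemma lt_double_lres n t : odd n -> (2 * lres t n < n%:Z) = ~~ upper n t.
Proof. by move=> on; have := oddn_neq_double (lres t n) on; rewrite /upper -leNgt; lia. Qed.

Section FourCounts.
Variables (n : nat) (x : int).
Hypothesis on : odd n.
Local Notation s := (iota 1 n./2).
Local Notation A := (fun k : nat => upper n (k%:Z * x)).
Local Notation B := (fun k : nat => upper n (k%:Z * (1 - x))).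

(* {kx} + {k(1-x)} is congruent to k and lies in [0, 2n). *)
Lemma lres_add_compl k : (2 * k < n)%N ->
  lres (k%:Z * x) n + lres (k%:Z * (1 - x)) n
    = k%:Z + (if k%:Z < lres (k%:Z * x) n then n%:Z else 0).
Proof.
move=> kn; have n0 := odd_gt0 on.
have [ul uh] := andP (lres_bounds (k%:Z * x) n0).
have [vl vh] := andP (lres_bounds (k%:Z * (1 - x)) n0).
have : lres (lres (k%:Z * x) n + lres (k%:Z * (1 - x)) n) n = k%:Z.
  by rewrite /lres modzDm -mulrDr addrC subrK mulr1 modz_small //; lia.
move: ul uh vl vh; rewrite /lres; set u := (_ %% _)%Z; set v := (_ %% _)%Z => ul uh vl vh.
have [uvn|uvn] := ltP (u + v) n%:Z.
  by rewrite modz_small => [E|]; [case: ifP | ]; lia.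
rewrite -[u + v](subrK n%:Z) modzDr modz_small => [E|]; last lia.
by case: ifP; lia.
Qed.

Lemma lt_lres_upper k : (2 * k < n)%N ->
  (k%:Z < lres (k%:Z * x) n) = upper n (k%:Z * x) || upper n (k%:Z * (1 - x)).
Proof.
move=> kn; have := lres_add_compl kn; have n0 := odd_gt0 on.
have [ul uh] := andP (lres_bounds (k%:Z * x) n0).
have [vl vh] := andP (lres_bounds (k%:Z * (1 - x)) n0).
rewrite /upper; case: ifP => ku E; apply/esym.
  by apply/orP; case: (ltrP n%:Z (2 * lres (k%:Z * x) n)) => ?; [left | right; lia].
by apply/norP; split; apply/negP; lia.
Qed.

Hypotheses (cx : coprimez x n) (cy : coprimez (1 - x) n).

Lemma odd_gauss_count_2x1x : odd (gauss_count n (2 * x * (1 - x)))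
  = odd (gauss_count n 2) (+) odd (gauss_count n x) (+) odd (gauss_count n (1 - x)).
Proof.
have c2 : coprimez 2 n by rewrite coprimez2n.
by rewrite !odd_gauss_countM ?coprimezMl ?c2 ?cx.
Qed.

Lemma odd_count_upper_or :
  odd (count (predU A B) s) = odd (gauss_count n (2 * x * (1 - x))).
Proof.
have [Wx Ex] := sum_lres_gauss_count on cx; have [Wy Ey] := sum_lres_gauss_count on cy.
set C := count (predU A B) s; set T := (\sum_(k <- s) k)%N in Ex Ey.
have ES : \sum_(k <- s) lres (k%:Z * x) n + \sum_(k <- s) lres (k%:Z * (1 - x)) n
    = T%:Z + n%:Z * C%:Z.
  rewrite -big_split /= /T /C count_sum !rmorph_sum /= mulr_sumr -big_split /=.
  apply: eq_big_seq => k; rewrite mem_iota_half // => /andP [_ kn].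
  by rewrite lres_add_compl // lt_lres_upper //; case: (_ || _); rewrite ?mulr1 ?mulr0.
have /even_natz_double : (C + T + gauss_count n x + gauss_count n (1 - x))%N%:Z
    = 2 * (T%:Z + Wx + Wy - (n./2)%:Z * C%:Z).
  by have := odd_natz_half on; rewrite !PoszD; nia.
rewrite odd_gauss_count_2x1x odd_gauss_count2 // -/T !oddD.
by case: (odd C); case: (odd T); case: (odd (gauss_count n x)); case: (odd (gauss_count n _)).
Qed.

Lemma odd_count_upper_and : odd (count (predI A B) s) = odd (gauss_count n 2).
Proof.
have := congr1 odd (count_predUI A B s); rewrite !oddD odd_count_upper_or.
rewrite odd_gauss_count_2x1x -/(gauss_count n x) -/(gauss_count n (1 - x)).
by case: (odd (count _ _)); case: (odd (gauss_count n 2));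
  case: (odd (gauss_count n x)); case: (odd (gauss_count n (1 - x))).
Qed.

Lemma odd_count_upper_nor :
  odd (count (predC (predU A B)) s) = odd (gauss_count n (2 * x * (x - 1))).
Proof.
have cN1 : coprimez (-1) n by rewrite coprimezE /= coprime1n.
have c2 : coprimez 2 n by rewrite coprimez2n.
have c2x1x : coprimez (2 * x * (1 - x)) n by rewrite !coprimezMl c2 cx cy.
have -> : 2 * x * (x - 1) = -1 * (2 * x * (1 - x)) by ring.
have := congr1 odd (count_predC (predU A B) s).
rewrite odd_gauss_countM // gauss_countN1 // size_iota oddD odd_count_upper_or.
by case: (odd (count _ _)); case: (odd n./2); case: (odd (gauss_count n _)).
Qed.

Lemma odd_count_upper_andN : odd (count (predD A B) s) = odd (gauss_count n (2 * x)).
Proof.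
have c2 : coprimez 2 n by rewrite coprimez2n.
have := congr1 odd (count_predDI A B s); rewrite oddD odd_count_upper_and.
rewrite odd_gauss_countM // -/(gauss_count n x).
by case: (odd (count _ _)); case: (odd (gauss_count n 2)); case: (odd (gauss_count n x)).
Qed.

End FourCounts.

Unset Implicit Arguments.

Theorem theorem1p1 (n : nat) (x : int) :
  (0 < n)%N -> odd n -> coprimez (x * (1 - x)) n%:Z ->
  [/\ (-1) ^+ cnt n (fun k => k%:Z < lres (k%:Z * x) n) = jacobi (2 * x * (1 - x)) n,
      (-1) ^+ cnt n (fun k => (n%:Z < 2 * lres (k%:Z * x) n)
                              && (n%:Z < 2 * lres (k%:Z * (1 - x)) n)) = jacobi 2 n,
      (-1) ^+ cnt n (fun k => (2 * lres (k%:Z * x) n < n%:Z)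
                              && (2 * lres (k%:Z * (1 - x)) n < n%:Z))
        = jacobi (2 * x * (x - 1)) n
    & (-1) ^+ cnt n (fun k => (n%:Z < 2 * lres (k%:Z * x) n)
                              && (2 * lres (k%:Z * (1 - x)) n < n%:Z)) = jacobi (2 * x) n].
Proof.
move=> _ on; rewrite coprimezMl => /andP [cx cy].
have c2 : coprimez 2 n by rewrite coprimez2n.
have cy' : coprimez (x - 1) n by rewrite -opprB coprimezE abszN.
rewrite !cnt_iota // !jacobi_gauss ?coprimezMl ?c2 ?cx ?cy ?cy' //.
split; rewrite -[RHS]signr_odd -signr_odd; congr (_ ^+ _).
- rewrite -(odd_count_upper_or on cx cy); congr (odd _); apply: eq_in_count => k.
  by rewrite mem_iota_half // => /andP [_ kn]; rewrite /= lt_lres_upper.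
- by rewrite -(odd_count_upper_and on cx cy); congr (odd _); apply: eq_count.
- rewrite -(odd_count_upper_nor on cx cy); congr (odd _); apply: eq_count => k.
  by rewrite /= !lt_double_lres // negb_or.
- rewrite -(odd_count_upper_andN on cx cy); congr (odd _); apply: eq_count => k.
  by rewrite /= lt_double_lres // andbC.
Qed.
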